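(* Let $n$ be such that $n/2$ is odd, let $\Omega\subseteq\mathbb{R}^n$ be open, let $\underline{f}$ be a vector-valued function on $\Omega$ and let $\lambda\in\mathbb{C}\setminus\{0\}$. With $A=M^{ie_N}\partial_{\underline{x}}^{-\underline{f}}$ and $B=M^{ie_N}\partial_{\underline{x}}^{\underline{f}}$ acting on (sufficiently smooth) $\mathbb{C}_n$-valued functions on $\Omega$, the following direct sum decompositions hold: (i) $\ker(A^2-\lambda^2)=\ker\left(\partial_{\underline{x}}-M^{\underline{f}+\lambda ie_N}\right)\oplus\ker\left(\partial_{\underline{x}}-M^{\underline{f}-\lambda ie_N}\right)$; (ii) $\ker(B^2-\lambda^2)=\ker\left(\partial_{\underline{x}}+M^{\underline{f}-\lambda ie_N}\right)\oplus\ker\left(\partial_{\underline{x}}+M^{\underline{f}+\lambda ie_N}\right)$.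
   Context: $\mathbb{R}_{0,n}$ is the real Clifford algebra generated by an orthonormal basis $e_1,\dots,e_n$ of $\mathbb{R}^n$ with relations $e_je_k+e_ke_j=-2\delta_{jk}$; $\mathbb{C}_n=\mathbb{R}_{0,n}\otimes\mathbb{C}$, with $i$ the complex unit. $e_N=e_1e_2\cdots e_n$ is the pseudo-scalar. The Dirac operator is $\partial_{\underline{x}}=\sum_{j=1}^n e_j\partial_{x_j}$, acting from the left. For a function $f$, $M^f$ is right multiplication: $M^fg=gf$; $\partial_{\underline{x}}^{\pm f}=\partial_{\underline{x}}\pm M^f$. *)

From HB Require Import structures.
From mathcomp Require Import all_boot all_order all_algebra.
From mathcomp Require Import all_classical all_reals all_analysis.
From mathcomp Require Import complex.
Set Implicit Arguments. Unset Strict Implicit. Unset Printing Implicit Defensive.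
Import Order.TTheory GRing.Theory Num.Theory.
Import numFieldNormedType.Exports.
Local Open Scope ring_scope.
Local Open Scope complex_scope.

Section Clifford.
Variables (R : realType) (n : nat).

(* C_n = R_{0,n} (x) C, with complex coefficients on the blade basis e_A,
   A a subset of {0..n-1}; e_A = e_{a_1} ... e_{a_k} with a_1 < ... < a_k. *)
Definition Cl := {ffun {set 'I_n} -> R[i]}.

(* e_A e_B = (-1)^(clsign A B) e_{A triangle B}: the exponent counts the
   transpositions needed to reorder, plus one sign per e_j e_j = -1. *)
Definition clsign (A B : {set 'I_n}) : nat :=
  #|[set p : 'I_n * 'I_n | [&& p.1 \in A, p.2 \in B & (p.2 < p.1)%N]]|
  + #|A :&: B|.

Definition clmul (a b : Cl) : Cl :=
  [ffun C => \sum_(A : {set 'I_n}) \sum_(B : {set 'I_n})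
     (if (A :\: B) :|: (B :\: A) == C
      then (-1) ^+ clsign A B * a A * b B else 0)].

Definition clone : Cl := [ffun A => (A == finset.set0)%:R].

Definition cle (j : 'I_n) : Cl := [ffun A => (A == finset.set1 j)%:R].

Definition eN : Cl := foldr clmul clone [seq cle j | j <- enum 'I_n].

Definition ieN : Cl := 'i *: eN.

Definition clvec (v : 'rV[R]_n) : Cl := \sum_(j < n) (v 0 j)%:C *: cle j.

Definition cl_partial (j : 'I_n) (g : 'rV[R]_n -> Cl) : 'rV[R]_n -> Cl :=
  fun x => [ffun A =>
    ('D_(delta_mx 0 j) (fun y => complex.Re (g y A)) x)
    +i* ('D_(delta_mx 0 j) (fun y => complex.Im (g y A)) x)].

Definition iter_partial (js : seq 'I_n) (g : 'rV[R]_n -> Cl) :=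
  foldr cl_partial g js.

Definition smooth_on (Om : set 'rV[R]_n) (g : 'rV[R]_n -> Cl) : Prop :=
  forall (js : seq 'I_n) (A : {set 'I_n}) (x : 'rV[R]_n), Om x ->
    let h := iter_partial js g in
    [/\ {for x, continuous (fun y => complex.Re (h y A))},
        {for x, continuous (fun y => complex.Im (h y A))} &
        forall j : 'I_n,
          derivable (fun y => complex.Re (h y A)) x (delta_mx 0 j) /\
          derivable (fun y => complex.Im (h y A)) x (delta_mx 0 j)].

Definition dirac_op (g : 'rV[R]_n -> Cl) : 'rV[R]_n -> Cl :=
  fun x => \sum_(j < n) clmul (cle j) (cl_partial j g x).

Definition Mr (h : 'rV[R]_n -> Cl) (g : 'rV[R]_n -> Cl) : 'rV[R]_n -> Cl :=
  fun x => clmul (g x) (h x).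

Definition Aop (f : 'rV[R]_n -> Cl) (g : 'rV[R]_n -> Cl) : 'rV[R]_n -> Cl :=
  Mr (fun=> ieN) (fun x => dirac_op g x - Mr f g x).
Definition Bop (f : 'rV[R]_n -> Cl) (g : 'rV[R]_n -> Cl) : 'rV[R]_n -> Cl :=
  Mr (fun=> ieN) (fun x => dirac_op g x + Mr f g x).

Definition ker_on (Om : set 'rV[R]_n) (T : ('rV[R]_n -> Cl) -> ('rV[R]_n -> Cl))
  (g : 'rV[R]_n -> Cl) : Prop :=
  smooth_on Om g /\ forall x, Om x -> T g x = 0.

Definition direct_sum_on (Om : set 'rV[R]_n)
  (S K1 K2 : ('rV[R]_n -> Cl) -> Prop) : Prop :=
  (forall g, S g <-> exists g1 g2, [/\ K1 g1, K2 g2 &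
                                     forall x, Om x -> g x = g1 x + g2 x])
  /\ (forall g, K1 g -> K2 g -> forall x, Om x -> g x = 0).

End Clifford.

From HB Require Import structures.
From mathcomp Require Import all_boot all_order all_algebra.
From mathcomp Require Import all_classical all_reals all_analysis.
From mathcomp Require Import complex.
From mathcomp Require Import ring zify.
Import Order.TTheory GRing.Theory Num.Theory.
Import numFieldNormedType.Exports.
Set Implicit Arguments. Unset Strict Implicit. Unset Printing Implicit Defensive.
Local Open Scope ring_scope.

(* Since n/2 is odd, e_N^2 = -1: on a blade e_A, multiplying twice by e_N on
   the right gives the sign (-1)^(C(n,2) + n) = -1.  Hence right multiplication
   by J = i e_N is an involution.  For A = M^J (d - M^F) the equation
   (d - M^(F + cJ)) g = 0 says exactly A g = c g, so the two kernels are the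
   eigenspaces of A for the eigenvalues lam and -lam.  Their sum therefore lies in
   ker (A^2 - lam^2) and they meet only in 0; conversely every g in
   ker (A^2 - lam^2) is (A g + lam g)/(2 lam) - (A g - lam g)/(2 lam), a sum of
   eigenfunctions.  Part (ii) is part (i) for F = -f, since B = M^J (d + M^f). *)

Section CliffordAlgebra.
Variables (R : realType) (n : nat).
Local Notation Cl := (Cl R n).

Lemma scaleC (k x : R[i]) : k *: x = k * x.
Proof. by []. Qed.

Lemma clmulDl (a b c : Cl) : clmul (a + b) c = clmul a c + clmul b c.
Proof.
apply/ffunP => C; rewrite !ffunE -big_split; apply: eq_bigr => A _.
rewrite -big_split; apply: eq_bigr => B _; rewrite ffunE.
by case: (_ == C) => /=; [ring | rewrite addr0].
Qed.

Lemma clmulDr (a b c : Cl) : clmul a (b + c) = clmul a b + clmul a c.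
Proof.
apply/ffunP => C; rewrite !ffunE -big_split; apply: eq_bigr => A _.
rewrite -big_split; apply: eq_bigr => B _; rewrite ffunE.
by case: (_ == C) => /=; [ring | rewrite addr0].
Qed.

Lemma clmulZl k (a c : Cl) : clmul (k *: a) c = k *: clmul a c.
Proof.
apply/ffunP => C; rewrite !ffunE scaler_sumr; apply: eq_bigr => A _.
rewrite scaler_sumr; apply: eq_bigr => B _; rewrite !ffunE !scaleC.
by case: (_ == C); [ring | rewrite mulr0].
Qed.

Lemma clmulZr k (a c : Cl) : clmul a (k *: c) = k *: clmul a c.
Proof.
apply/ffunP => C; rewrite !ffunE scaler_sumr; apply: eq_bigr => A _.
rewrite scaler_sumr; apply: eq_bigr => B _; rewrite !ffunE !scaleC.
by case: (_ == C); [ring | rewrite mulr0].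
Qed.

Lemma clmulNl (a c : Cl) : clmul (- a) c = - clmul a c.
Proof. by rewrite -scaleN1r clmulZl scaleN1r. Qed.

Lemma clmulNr (a c : Cl) : clmul a (- c) = - clmul a c.
Proof. by rewrite -scaleN1r clmulZr scaleN1r. Qed.

Lemma clmulBl (a b c : Cl) : clmul (a - b) c = clmul a c - clmul b c.
Proof. by rewrite clmulDl clmulNl. Qed.

Lemma clmul0l (c : Cl) : clmul 0 c = 0.
Proof. by have := clmulZl 0 0 c; rewrite !scale0r. Qed.

Lemma clmul_suml I (s : seq I) (P : pred I) (F : I -> Cl) b :
  clmul (\sum_(i <- s | P i) F i) b = \sum_(i <- s | P i) clmul (F i) b.
Proof.
elim: s => [|i s IH]; first by rewrite !big_nil clmul0l.
by rewrite !big_cons -IH; case: (P i) => //; rewrite clmulDl.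
Qed.

Definition blade (A : {set 'I_n}) : Cl := [ffun C => (C == A)%:R].
Definition symdiff (A B : {set 'I_n}) := (A :\: B) :|: (B :\: A).

Lemma clmul_blade A B :
  clmul (blade A) (blade B) = (-1) ^+ clsign A B *: blade (symdiff A B).
Proof.
apply/ffunP => C; rewrite !ffunE.
rewrite (bigD1 A) //= [X in _ + X]big1 ?addr0; last first.
  move=> A' nA; apply: big1 => B' _; rewrite !ffunE.
  by case: (_ == C); rewrite // (negbTE nA) mulr0 mul0r.
rewrite (bigD1 B) //= [X in _ + X]big1 ?addr0; last first.
  move=> B' nB; rewrite !ffunE.
  by case: (_ == C); rewrite // (negbTE nB) mulr0.
rewrite !ffunE !eqxx !mulr1 /symdiff eq_sym scaleC.
by case: (C == _); rewrite ?mulr1 ?mulr0.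
Qed.

Lemma cl_blade_decomp (X : Cl) : X = \sum_(A : {set 'I_n}) X A *: blade A.
Proof.
apply/ffunP => C; rewrite sum_ffunE (bigD1 C) //= [X in _ + X]big1 ?addr0.
  by rewrite !ffunE eqxx scaleC mulr1.
by move=> A nA; rewrite !ffunE scaleC eq_sym (negbTE nA) mulr0.
Qed.

Lemma foldr_clmul_cle (s : seq 'I_n) : sorted (fun a b : 'I_n => (a < b)%N) s ->
  foldr (@clmul R n) (clone R n) [seq cle R j | j <- s] = blade [set x in s].
Proof.
elim: s => [_|j s IH hs] /=.
  by apply/ffunP => C; rewrite !ffunE; congr (_ == _)%:R; apply/setP => x; rewrite !inE.
rewrite IH; last exact: path_sorted hs.
have gt_j : all (fun b : 'I_n => (j < b)%N) s.
  by apply: order_path_min hs => a b c; exact: ltn_trans.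
have jNs : j \notin s by apply/negP => /(allP gt_j); rewrite ltnn.
change (cle R j) with (blade [set j]); rewrite clmul_blade.
have -> : clsign [set j] [set x in s] = 0%N.
  rewrite /clsign; apply/eqP; rewrite addn_eq0 !cards_eq0; apply/andP; split.
    apply/eqP/setP => -[p q]; rewrite !inE /=; apply/negbTE/and3P => -[/eqP -> qs].
    by rewrite ltnNge ltnW // (allP gt_j).
  apply/eqP/setP => x; rewrite !inE; apply/negbTE/andP => -[/eqP -> js].
  by rewrite js in jNs.
rewrite expr0 scale1r; congr blade; apply/setP => x; rewrite /symdiff !inE.
by case: (x =P j) => [->|]; rewrite ?(negbTE jNs) //= andbF.
Qed.

Lemma eN_blade : eN R n = blade [set: 'I_n].
Proof.
rewrite /eN foldr_clmul_cle.
  by congr blade; apply/setP => x; rewrite !inE mem_enum.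
by have := iota_ltn_sorted 0 n; rewrite -val_enum_ord sorted_map.
Qed.

End CliffordAlgebra.

Section PseudoScalar.
Variables (R : realType) (n : nat).
Local Notation Cl := (Cl R n).

Lemma sum_ord_ltn i m : (\sum_(j < m) (j < i))%N = minn i m.
Proof.
elim: m => [|m IH]; first by rewrite big_ord0 minn0.
by rewrite big_ord_recr /= IH; case: (ltnP m i) => /=; lia.
Qed.

Lemma card_ord_pairs_ltn :
  #|[set p : 'I_n * 'I_n | (p.2 < p.1)%N]| = 'C(n, 2).
Proof.
rewrite -sum1_card big_mkcond /=.
transitivity (\sum_(i : 'I_n) \sum_(j : 'I_n) (j < i : nat))%N.
  by rewrite pair_bigA; apply: eq_bigr => -[i j] _; rewrite inE /=; case: (j < i)%N.
rewrite -bin2_sum big_mkord; apply: eq_bigr => i _.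
by rewrite sum_ord_ltn; apply/minn_idPl/ltnW.
Qed.

Lemma clsign_setT A : clsign A [set: 'I_n] =
  (#|[set p : 'I_n * 'I_n | (p.1 \in A) && (p.2 < p.1)%N]| + #|A|)%N.
Proof.
by rewrite /clsign finset.setIT; congr (_ + _)%N; apply: eq_card => p; rewrite !inE.
Qed.

Lemma clsign_setT_compl A :
  (clsign A [set: 'I_n] + clsign (~: A) [set: 'I_n] = 'C(n, 2) + n)%N.
Proof.
have := cardsC A; have := cardsID [set p : 'I_n * 'I_n | p.1 \in A]
                                   [set p : 'I_n * 'I_n | (p.2 < p.1)%N].
rewrite card_ord card_ord_pairs_ltn !clsign_setT.
have -> : [set p : 'I_n * 'I_n | (p.1 \in ~: A) && (p.2 < p.1)%N] =
          [set p : 'I_n * 'I_n | (p.2 < p.1)%N] :\: [set p | p.1 \in A].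
  by apply/setP => p; rewrite !inE andbC.
have -> : [set p : 'I_n * 'I_n | (p.1 \in A) && (p.2 < p.1)%N] =
          [set p : 'I_n * 'I_n | (p.2 < p.1)%N] :&: [set p | p.1 \in A].
  by apply/setP => p; rewrite !inE andbC.
by move=> eC eA; rewrite addnACA eC eA.
Qed.

(* For [n = 2m] the sign exponent is [C(2m,2) + 2m = m(2m+1)]. *)
Lemma odd_clsign_setT_compl A : (2 %| n)%N -> odd (n %/ 2) ->
  odd (clsign A [set: 'I_n] + clsign (~: A) [set: 'I_n]).
Proof.
move=> /divnK n_even m_odd; rewrite clsign_setT_compl -n_even bin2.
have -> : ((n %/ 2 * 2 * (n %/ 2 * 2).-1)./2 = n %/ 2 * (n %/ 2 * 2).-1)%N.
  by rewrite -mulnA mulnCA mul2n doubleK.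
set m := (n %/ 2)%N in m_odd *.
have -> : (m * (m * 2).-1 + m * 2 = m * (m * 2).+1)%N by case: m {m_odd}; lia.
by rewrite oddM m_odd /= muln2 odd_double.
Qed.

Lemma clmul_eN_eN (X : Cl) : (2 %| n)%N -> odd (n %/ 2) ->
  clmul (clmul X (eN R n)) (eN R n) = - X.
Proof.
move=> n_even m_odd.
rewrite [in LHS](cl_blade_decomp X) eN_blade !clmul_suml.
rewrite [in RHS](cl_blade_decomp X) -sumrN; apply: eq_bigr => A _.
have AT : symdiff A [set: 'I_n] = ~: A.
  by apply/setP => x; rewrite /symdiff !inE; case: (x \in A).
have ACT : symdiff (~: A) [set: 'I_n] = A.
  by apply/setP => x; rewrite /symdiff !inE; case: (x \in A).
rewrite !clmulZl clmul_blade clmulZl clmul_blade AT ACT !scalerA -mulrA -exprD.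
by rewrite -signr_odd odd_clsign_setT_compl // mulrN1 scaleNr.
Qed.

Lemma clmul_ieN_ieN (X : Cl) : (2 %| n)%N -> odd (n %/ 2) ->
  clmul (clmul X (ieN R n)) (ieN R n) = X.
Proof.
move=> n_even m_odd; rewrite /ieN !clmulZr clmulZl scalerA clmul_eN_eN //.
by rewrite -expr2 sqr_i scaleN1r opprK.
Qed.

End PseudoScalar.

Section Smooth.
Variables (R : realType) (n : nat) (Om : set 'rV[R]_n).
Hypothesis Om_open : open Om.
Local Notation V := 'rV[R]_n.
Local Notation Cl := (Cl R n).
Local Open Scope complex_scope.

Definition rpartial (j : 'I_n) (u : V -> R) : V -> R := 'D_(delta_mx 0 j) u.
Definition riter_partial (js : seq 'I_n) (u : V -> R) := foldr rpartial u js.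

Definition diff_on (w : V -> R) := forall x, Om x ->
  {for x, continuous w} /\ forall j, derivable w x (delta_mx 0 j).

(* The graded version of the smoothness in [smooth_on]: induction on the order
   [k] is what makes the Leibniz rule go through. *)
Definition ck_on k (u : V -> R) :=
  forall js, (size js <= k)%N -> diff_on (riter_partial js u).
Definition rsmooth_on (u : V -> R) := forall k, ck_on k u.

Lemma near_Om x : Om x -> \forall y \near x, Om y.
Proof. by move=> Ox; apply: Om_open. Qed.

Lemma riter_partial_eq_on js u v : (forall y, Om y -> u y = v y) ->
  forall y, Om y -> riter_partial js u y = riter_partial js v y.
Proof.
move=> uv; elim: js => [|j js IH] y Oy /=; first exact: uv.
apply: near_eq_derive; near=> z; apply: IH.
by near: z; exact: near_Om.
Unshelve. all: by end_near. Qed.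

Lemma diff_on_eq u v : (forall y, Om y -> u y = v y) -> diff_on u -> diff_on v.
Proof.
move=> uv du x Ox; have [cu dxu] := du x Ox.
have nuv : \forall y \near x, u y = v y.
  by near=> y; apply: uv; near: y; exact: near_Om.
split; last by move=> j; exact: near_eq_derivable (dxu j).
have := cvg_trans (near_eq_cvg nuv) cu.
by rewrite (uv x Ox); apply; exact: nbhs_filter.
Unshelve. all: by end_near. Qed.

Lemma diff_onD u v : diff_on u -> diff_on v -> diff_on (u \+ v).
Proof.
move=> du dv x Ox; have [cu dxu] := du x Ox; have [cv dxv] := dv x Ox.
by split; [exact: cvgD cu cv | move=> j; exact: derivableD].
Qed.

Lemma diff_onM u v : diff_on u -> diff_on v -> diff_on (u \* v).
Proof.
move=> du dv x Ox; have [cu dxu] := du x Ox; have [cv dxv] := dv x Ox.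
by split; [exact: cvgM cu cv | move=> j; exact: derivableM].
Qed.

Lemma diff_on_cst c : diff_on (cst c).
Proof. by move=> x _; split; [exact: cst_continuous | move=> j; exact: derivable_cst]. Qed.

Lemma ck_on_eq k u v : (forall y, Om y -> u y = v y) -> ck_on k u -> ck_on k v.
Proof. by move=> uv cu js hjs; apply: diff_on_eq (cu js hjs); exact: riter_partial_eq_on. Qed.

Lemma ck_on_diff k w : ck_on k w -> diff_on w.
Proof. by move=> cw; exact: (cw [::]). Qed.

Lemma ck_onS k w : diff_on w -> (forall j, ck_on k (rpartial j w)) -> ck_on k.+1 w.
Proof.
move=> dw cw; case/lastP => [_|js j hs]; first exact: dw.
rewrite /riter_partial -cats1 foldr_cat; apply: cw.
by rewrite size_rcons in hs.
Qed.

Lemma ck_on_partial k w j : ck_on k.+1 w -> ck_on k (rpartial j w).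
Proof.
move=> cw js hs; have := cw (rcons js j).
by rewrite size_rcons ltnS /riter_partial -cats1 foldr_cat; apply.
Qed.

Lemma ck_on_le k w : ck_on k.+1 w -> ck_on k w.
Proof. by move=> cw js hs; apply/cw/leqW. Qed.

Lemma ck_onD k u v : ck_on k u -> ck_on k v -> ck_on k (u \+ v).
Proof.
elim: k u v => [|k IH] u v cu cv.
  by case=> // _; apply: diff_onD; [exact: ck_on_diff cu | exact: ck_on_diff cv].
have [du dv] := (ck_on_diff cu, ck_on_diff cv).
apply: ck_onS => [|j]; first exact: diff_onD.
apply: ck_on_eq (IH _ _ (ck_on_partial j cu) (ck_on_partial j cv)) => y Oy.
by rewrite /rpartial deriveD //; [case: (du y Oy) | case: (dv y Oy)].
Qed.

Lemma ck_onM k u v : ck_on k u -> ck_on k v -> ck_on k (u \* v).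
Proof.
elim: k u v => [|k IH] u v cu cv.
  by case=> // _; apply: diff_onM; [exact: ck_on_diff cu | exact: ck_on_diff cv].
have [du dv] := (ck_on_diff cu, ck_on_diff cv).
apply: ck_onS => [|j]; first exact: diff_onM.
apply: ck_on_eq (ck_onD (IH _ _ (ck_on_le cu) (ck_on_partial j cv))
                        (IH _ _ (ck_on_le cv) (ck_on_partial j cu))) => y Oy.
by rewrite /rpartial deriveM //; [case: (du y Oy) | case: (dv y Oy)].
Qed.

Lemma ck_on_cst k c : ck_on k (cst c).
Proof.
elim: k c => [|k IH] c; first by case=> // _; exact: diff_on_cst.
apply: ck_onS => [|j]; first exact: diff_on_cst.
by apply: ck_on_eq (IH 0) => y _; rewrite /rpartial derive_cst.
Qed.

Lemma rsmooth_on_eq u v : (forall y, Om y -> u y = v y) -> rsmooth_on u -> rsmooth_on v.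
Proof. by move=> uv su k; apply: ck_on_eq (su k). Qed.

Lemma rsmooth_onD u v : rsmooth_on u -> rsmooth_on v -> rsmooth_on (u \+ v).
Proof. by move=> su sv k; apply: ck_onD. Qed.

Lemma rsmooth_onM u v : rsmooth_on u -> rsmooth_on v -> rsmooth_on (u \* v).
Proof. by move=> su sv k; apply: ck_onM. Qed.

Lemma rsmooth_on_cst c : rsmooth_on (cst c).
Proof. by move=> k; apply: ck_on_cst. Qed.

Lemma rsmooth_onN u : rsmooth_on u -> rsmooth_on (fun y => - u y).
Proof.
move=> su; apply: rsmooth_on_eq (rsmooth_onM (rsmooth_on_cst (-1)) su) => y _.
by rewrite /= mulN1r.
Qed.

Lemma rsmooth_on_partial j u : rsmooth_on u -> rsmooth_on (rpartial j u).
Proof. by move=> su k; apply: ck_on_partial. Qed.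


Local Notation smooth := (smooth_on Om).

Lemma ReD (a b : R[i]) : complex.Re (a + b) = complex.Re a + complex.Re b.
Proof. by case: a; case: b. Qed.

Lemma ImD (a b : R[i]) : complex.Im (a + b) = complex.Im a + complex.Im b.
Proof. by case: a; case: b. Qed.

Lemma ReM (a b : R[i]) :
  complex.Re (a * b) = complex.Re a * complex.Re b - complex.Im a * complex.Im b.
Proof. by case: a; case: b. Qed.

Lemma ImM (a b : R[i]) :
  complex.Im (a * b) = complex.Re a * complex.Im b + complex.Im a * complex.Re b.
Proof. by case: a; case: b. Qed.

Definition csmooth_on (u : V -> R[i]) :=
  rsmooth_on (fun y => complex.Re (u y)) /\ rsmooth_on (fun y => complex.Im (u y)).

Lemma csmooth_on_eq u v : (forall y, Om y -> u y = v y) ->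
  csmooth_on u -> csmooth_on v.
Proof.
move=> uv [su1 su2].
by split; [apply: (rsmooth_on_eq _ su1) | apply: (rsmooth_on_eq _ su2)];
  move=> y Oy; rewrite uv.
Qed.

Lemma csmooth_onD u v : csmooth_on u -> csmooth_on v -> csmooth_on (u \+ v).
Proof.
move=> [su1 su2] [sv1 sv2]; split.
  by apply: (rsmooth_on_eq _ (rsmooth_onD su1 sv1)) => y _; rewrite /= ReD.
by apply: (rsmooth_on_eq _ (rsmooth_onD su2 sv2)) => y _; rewrite /= ImD.
Qed.

Lemma csmooth_onM u v : csmooth_on u -> csmooth_on v -> csmooth_on (u \* v).
Proof.
move=> [su1 su2] [sv1 sv2]; split.
  apply: (rsmooth_on_eq _
    (rsmooth_onD (rsmooth_onM su1 sv1) (rsmooth_onN (rsmooth_onM su2 sv2)))).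
  by move=> y _; rewrite /= ReM.
apply: (rsmooth_on_eq _ (rsmooth_onD (rsmooth_onM su1 sv2) (rsmooth_onM su2 sv1))).
by move=> y _; rewrite /= ImM.
Qed.

Lemma csmooth_on_cst c : csmooth_on (cst c).
Proof. by split; exact: rsmooth_on_cst. Qed.

Lemma csmooth_on_sum I (s : seq I) (P : pred I) (F : I -> V -> R[i]) :
  (forall i, csmooth_on (F i)) -> csmooth_on (fun y => \sum_(i <- s | P i) F i y).
Proof.
move=> sF; elim: s => [|i s IH].
  by apply: (csmooth_on_eq _ (csmooth_on_cst 0)) => y _; rewrite big_nil.
case Pi: (P i);
  [apply: (csmooth_on_eq _ (csmooth_onD (sF i) IH)) | apply: (csmooth_on_eq _ IH)];
  by move=> y _; rewrite big_cons Pi.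
Qed.

Lemma Re_iter_partial js (g : V -> Cl) A :
  (fun y => complex.Re (iter_partial js g y A)) =
  riter_partial js (fun y => complex.Re (g y A)).
Proof. by elim: js => //= j js <-; apply/funext => y; rewrite /cl_partial ffunE. Qed.

Lemma Im_iter_partial js (g : V -> Cl) A :
  (fun y => complex.Im (iter_partial js g y A)) =
  riter_partial js (fun y => complex.Im (g y A)).
Proof. by elim: js => //= j js <-; apply/funext => y; rewrite /cl_partial ffunE. Qed.

Lemma smooth_onP (g : V -> Cl) : smooth g <-> forall A, csmooth_on (fun y => g y A).
Proof.
split=> [sg A | sg js A x Ox /=].
  split=> k js _ x Ox; have [c1 c2 d] := sg js A x Ox.
    by rewrite -Re_iter_partial; split=> // j; case: (d j).
  by rewrite -Im_iter_partial; split=> // j; case: (d j).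
have [[c1 d1] [c2 d2]] := ((sg A).1 _ js (leqnn _) x Ox, (sg A).2 _ js (leqnn _) x Ox).
by rewrite Re_iter_partial Im_iter_partial; split=> // j; exact: conj (d1 j) (d2 j).
Qed.

Lemma smooth_on_eq (g h : V -> Cl) : (forall y, Om y -> g y = h y) ->
  smooth g -> smooth h.
Proof.
move=> gh /smooth_onP sg; apply/smooth_onP => A.
by apply: (csmooth_on_eq _ (sg A)) => y Oy; rewrite gh.
Qed.

Lemma smooth_onD (g h : V -> Cl) : smooth g -> smooth h -> smooth (g \+ h).
Proof.
move=> /smooth_onP sg /smooth_onP sh; apply/smooth_onP => A.
by apply: (csmooth_on_eq _ (csmooth_onD (sg A) (sh A))) => y _; rewrite /= ffunE.
Qed.

Lemma smooth_onZ c (g : V -> Cl) : smooth g -> smooth (fun y => c *: g y).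
Proof.
move=> /smooth_onP sg; apply/smooth_onP => A.
by apply: (csmooth_on_eq _ (csmooth_onM (csmooth_on_cst c) (sg A))) => y _; rewrite ffunE.
Qed.

Lemma smooth_onB (g h : V -> Cl) : smooth g -> smooth h -> smooth (g \- h).
Proof.
move=> sg sh; apply: (smooth_on_eq _ (smooth_onD sg (smooth_onZ (-1) sh))) => y _.
by rewrite /= scaleN1r.
Qed.

Lemma smooth_on_cst (c : Cl) : smooth (cst c).
Proof. by apply/smooth_onP => A; exact: csmooth_on_cst. Qed.

Lemma smooth_on_clmul (g h : V -> Cl) :
  smooth g -> smooth h -> smooth (fun y => clmul (g y) (h y)).
Proof.
move=> /smooth_onP sg /smooth_onP sh; apply/smooth_onP => C.
apply: (@csmooth_on_eq (fun y => \sum_A \sum_B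
  (if symdiff A B == C then (-1) ^+ clsign A B * g y A * h y B else 0))).
  by move=> y _; rewrite ffunE.
do 2!apply: csmooth_on_sum => ?; case: (_ == C); last exact: csmooth_on_cst.
by apply: csmooth_onM (sh _); apply: csmooth_onM (sg _); exact: csmooth_on_cst.
Qed.

Lemma smooth_on_sum I (s : seq I) (P : pred I) (F : I -> V -> Cl) :
  (forall i, smooth (F i)) -> smooth (fun y => \sum_(i <- s | P i) F i y).
Proof.
move=> sF; apply/smooth_onP => A.
apply: (@csmooth_on_eq (fun y => \sum_(i <- s | P i) F i y A)).
  by move=> y _; rewrite sum_ffunE.
by apply: csmooth_on_sum => i; move/smooth_onP: (sF i); apply.
Qed.

Lemma smooth_on_partial j (g : V -> Cl) : smooth g -> smooth (cl_partial j g).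
Proof.
move=> /smooth_onP sg; apply/smooth_onP => A; have [sg1 sg2] := sg A.
by split; [apply: (rsmooth_on_eq _ (rsmooth_on_partial j sg1)) |
           apply: (rsmooth_on_eq _ (rsmooth_on_partial j sg2))];
  move=> y _; rewrite /cl_partial ffunE.
Qed.

Lemma smooth_on_dirac (g : V -> Cl) : smooth g -> smooth (dirac_op g).
Proof.
move=> sg; apply: smooth_on_sum => j.
exact: smooth_on_clmul (smooth_on_cst _) (smooth_on_partial j sg).
Qed.

Lemma derivable_Re_Im (g : V -> Cl) A x j : smooth g -> Om x ->
  derivable (fun y => complex.Re (g y A)) x (delta_mx 0 j) /\
  derivable (fun y => complex.Im (g y A)) x (delta_mx 0 j).
Proof. by move=> sg Ox; have [_ _] := sg [::] A x Ox; apply. Qed.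

Lemma derive_lincomb (a b : R) (u v : V -> R) x w :
  derivable u x w -> derivable v x w ->
  'D_w (fun y => a * u y + b * v y) x = a * 'D_w u x + b * 'D_w v x.
Proof.
move=> du dv.
have da : derivable (fun y => a * u y) x w := derivableM (derivable_cst a x w) du.
have db : derivable (fun y => b * v y) x w := derivableM (derivable_cst b x w) dv.
by rewrite (deriveD da db) (deriveMl a du) (deriveMl b dv).
Qed.

Lemma cl_partialD j (g h : V -> Cl) x : smooth g -> smooth h -> Om x ->
  cl_partial j (g \+ h) x = cl_partial j g x + cl_partial j h x.
Proof.
move=> sg sh Ox; apply/ffunP => A; rewrite !ffunE.
have [dg1 dg2] := derivable_Re_Im A j sg Ox.
have [dh1 dh2] := derivable_Re_Im A j sh Ox.
have -> : (fun y => complex.Re ((g \+ h) y A)) =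
          (fun y => complex.Re (g y A) + complex.Re (h y A)).
  by apply/funext => y; rewrite /= ffunE ReD.
have -> : (fun y => complex.Im ((g \+ h) y A)) =
          (fun y => complex.Im (g y A) + complex.Im (h y A)).
  by apply/funext => y; rewrite /= ffunE ImD.
by rewrite deriveD // deriveD.
Qed.

Lemma cl_partialZ j c (g : V -> Cl) x : smooth g -> Om x ->
  cl_partial j (fun y => c *: g y) x = c *: cl_partial j g x.
Proof.
move=> sg Ox; apply/ffunP => A; rewrite !ffunE.
have [dg1 dg2] := derivable_Re_Im A j sg Ox.
case: c => a b.
have -> : (fun y => complex.Re (((a +i* b) *: g y) A)) =
          (fun y => a * complex.Re (g y A) + (- b) * complex.Im (g y A)).
  by apply/funext => y; rewrite ffunE scaleC ReM /= mulNr.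
have -> : (fun y => complex.Im (((a +i* b) *: g y) A)) =
          (fun y => a * complex.Im (g y A) + b * complex.Re (g y A)).
  by apply/funext => y; rewrite ffunE scaleC ImM.
rewrite !derive_lincomb // scaleC.
by apply/eqP; rewrite eq_complex /=; apply/andP; split; apply/eqP; ring.
Qed.

Lemma cl_partial_eq_on j (g h : V -> Cl) x : (forall y, Om y -> g y = h y) -> Om x ->
  cl_partial j g x = cl_partial j h x.
Proof.
move=> gh Ox; apply/ffunP => A; rewrite !ffunE.
by congr (_ +i* _); apply: near_eq_derive; near=> y; rewrite gh //;
  near: y; exact: near_Om Ox.
Unshelve. all: by end_near. Qed.

Lemma dirac_opD (g h : V -> Cl) x : smooth g -> smooth h -> Om x ->
  dirac_op (g \+ h) x = dirac_op g x + dirac_op h x.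
Proof.
move=> sg sh Ox; rewrite /dirac_op -big_split; apply: eq_bigr => j _.
by rewrite cl_partialD // clmulDr.
Qed.

Lemma dirac_opZ c (g : V -> Cl) x : smooth g -> Om x ->
  dirac_op (fun y => c *: g y) x = c *: dirac_op g x.
Proof.
move=> sg Ox; rewrite /dirac_op scaler_sumr; apply: eq_bigr => j _.
by rewrite cl_partialZ // clmulZr.
Qed.

Lemma dirac_op_eq_on (g h : V -> Cl) x : (forall y, Om y -> g y = h y) -> Om x ->
  dirac_op g x = dirac_op h x.
Proof.
move=> gh Ox; apply: eq_bigr => j _.
by rewrite (cl_partial_eq_on j gh Ox).
Qed.

Definition dirac_subM (G g : V -> Cl) : V -> Cl :=
  fun x => dirac_op g x - clmul (g x) (G x).

(* [M^J (d - M^F)]; the operators [A] and [B] of the theorem are the cases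
   [J = i e_N], [F = f] and [F = -f]. *)
Definition twisted_dirac (J : Cl) (F g : V -> Cl) : V -> Cl :=
  fun x => clmul (dirac_subM F g x) J.

Section TwistedDirac.
Variables (J : Cl) (F : V -> Cl).
Hypothesis J_invol : forall X, clmul (clmul X J) J = X.
Hypothesis F_smooth : smooth F.

Local Notation A := (twisted_dirac J F).
Local Notation K c := (ker_on Om (dirac_subM (fun x => F x + c *: J))).

Lemma smooth_twisted_dirac g : smooth g -> smooth (A g).
Proof.
move=> sg; apply: smooth_on_clmul (smooth_on_cst _).
exact: smooth_onB (smooth_on_dirac sg) (smooth_on_clmul sg F_smooth).
Qed.

Lemma twisted_diracD g h x : smooth g -> smooth h -> Om x ->
  A (g \+ h) x = A g x + A h x.
Proof.
move=> sg sh Ox; rewrite /twisted_dirac /dirac_subM (dirac_opD sg sh Ox).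
by rewrite /= (clmulDl (g x)) opprD addrACA -clmulDl.
Qed.

Lemma twisted_diracZ c g x : smooth g -> Om x ->
  A (fun y => c *: g y) x = c *: A g x.
Proof.
move=> sg Ox; rewrite /twisted_dirac /dirac_subM (dirac_opZ c sg Ox).
by rewrite (clmulZl c (g x)) -scalerBr clmulZl.
Qed.

Lemma twisted_dirac_eq_on g h x : (forall y, Om y -> g y = h y) -> Om x ->
  A g x = A h x.
Proof.
by move=> gh Ox; rewrite /twisted_dirac /dirac_subM (dirac_op_eq_on gh Ox) gh.
Qed.

Lemma dirac_subM_shift c h x :
  dirac_subM (fun y => F y + c *: J) h x = clmul (A h x - c *: h x) J.
Proof.
rewrite /twisted_dirac clmulBl clmulZl J_invol /dirac_subM.
by rewrite (clmulDr (h x)) clmulZr opprD addrA.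
Qed.

Lemma ker_shiftP c h : K c h <-> smooth h /\ forall x, Om x -> A h x = c *: h x.
Proof.
split=> -[sh Kh]; split=> // x Ox; move: (Kh x Ox); rewrite dirac_subM_shift.
  by move/(congr1 (fun X => clmul X J)); rewrite J_invol clmul0l => /subr0_eq.
by move=> ->; rewrite subrr clmul0l.
Qed.

Lemma ker_shiftZ c k h : K c h -> K c (fun y => k *: h y).
Proof.
case/ker_shiftP=> sh Ah; apply/ker_shiftP; split=> [|x Ox]; first exact: smooth_onZ.
by rewrite twisted_diracZ // Ah // scalerA mulrC -scalerA.
Qed.

Lemma ker_shift_disjoint mu g : mu != 0 -> K mu g -> K (- mu) g ->
  forall x, Om x -> g x = 0.
Proof.
move=> mu0 /ker_shiftP[_ A1] /ker_shiftP[_ A2] x Ox.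
have : (mu + mu) *: g x = 0.
  by rewrite scalerDl -[X in _ + X]opprK -scaleNr -A2 // A1 // subrr.
move/eqP; rewrite scaler_eq0 -mulr2n mulrn_eq0 /= (negbTE mu0).
by move/eqP.
Qed.

Section KernelSum.
Variables (mu : R[i]) (g g1 g2 : V -> Cl).
Hypotheses (Kg1 : K mu g1) (Kg2 : K (- mu) g2).
Hypothesis g_sum : forall y, Om y -> g y = g1 y + g2 y.

Lemma twisted_dirac_ker_sum y : Om y -> A g y = mu *: g1 y + (- mu) *: g2 y.
Proof.
have [[s1 A1] [s2 A2]] := ((ker_shiftP _ _).1 Kg1, (ker_shiftP _ _).1 Kg2).
move=> Oy; rewrite (twisted_dirac_eq_on g_sum Oy).
by rewrite (twisted_diracD s1 s2 Oy) A1 // A2.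
Qed.

Lemma ker_sq_of_ker_sum : ker_on Om (fun h x => A (A h) x - mu ^+ 2 *: h x) g.
Proof.
have [[s1 A1] [s2 A2]] := ((ker_shiftP _ _).1 Kg1, (ker_shiftP _ _).1 Kg2).
split=> [|x Ox]; first by apply: smooth_on_eq (smooth_onD s1 s2) => y Oy; rewrite g_sum.
rewrite (twisted_dirac_eq_on twisted_dirac_ker_sum Ox).
rewrite (twisted_diracD (smooth_onZ mu s1) (smooth_onZ (- mu) s2) Ox).
rewrite !twisted_diracZ // A1 // A2 // !scalerA mulrNN -expr2 -scalerDr g_sum //.
by rewrite subrr.
Qed.

End KernelSum.

(* [A (A g + c g) = c^2 g + c A g = c (A g + c g)]. *)
Lemma ker_sq_shift c g : ker_on Om (fun h x => A (A h) x - c ^+ 2 *: h x) g ->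
  K c (fun y => A g y + c *: g y).
Proof.
move=> [sg AAg]; have sAg := smooth_twisted_dirac sg.
apply/ker_shiftP; split=> [|x Ox]; first exact/smooth_onD/smooth_onZ.
rewrite (twisted_diracD sAg (smooth_onZ c sg) Ox) twisted_diracZ //.
by rewrite (subr0_eq (AAg x Ox)) scalerDr scalerA -expr2 addrC.
Qed.

Lemma split_scale (mu : R[i]) (a b : Cl) : mu != 0 ->
  b = (2 * mu)^-1 *: (a + mu *: b) + - (2 * mu)^-1 *: (a + - mu *: b).
Proof.
move=> mu0; rewrite scaleNr -scalerBr opprD addrACA subrr add0r -scaleNr opprK.
by rewrite -scalerDl -mulr2n scalerA mulr_natl mulVf ?scale1r // mulrn_eq0.
Qed.

Lemma ker_sq_direct_sum mu : mu != 0 ->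
  direct_sum_on Om (ker_on Om (fun g x => A (A g) x - mu ^+ 2 *: g x))
    (ker_on Om (fun g x => dirac_op g x - clmul (g x) (F x + mu *: J)))
    (ker_on Om (fun g x => dirac_op g x - clmul (g x) (F x - mu *: J))).
Proof.
move=> mu0; have Kopp h : K (- mu) h <->
    ker_on Om (fun g x => dirac_op g x - clmul (g x) (F x - mu *: J)) h.
  by rewrite /dirac_subM; under eq_fun => ? do rewrite scaleNr.
split=> [g|g K1 /Kopp K2]; last exact: ker_shift_disjoint K1 K2.
split=> [Kg | [g1 [g2 [K1 /Kopp K2 g_sum]]]]; last exact: ker_sq_of_ker_sum K1 K2 g_sum.
exists (fun y => (2 * mu)^-1 *: (A g y + mu *: g y)).
exists (fun y => - (2 * mu)^-1 *: (A g y + - mu *: g y)).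
split; [exact/ker_shiftZ/ker_sq_shift | | by move=> x _; exact: split_scale].
by apply/Kopp/ker_shiftZ/ker_sq_shift; rewrite sqrrN.
Qed.

End TwistedDirac.

End Smooth.

Lemma ker_on_ext (R : realType) (n : nat) (Om : set 'rV[R]_n)
    (T T' : ('rV[R]_n -> Cl R n) -> 'rV[R]_n -> Cl R n) g :
  (forall x, Om x -> T g x = T' g x) -> ker_on Om T g <-> ker_on Om T' g.
Proof.
move=> TT'; split=> -[sg Kg]; split=> // x Ox.
  by rewrite -TT' ?Kg.
by rewrite TT' ?Kg.
Qed.

Lemma direct_sum_on_ext (R : realType) (n : nat) (Om : set 'rV[R]_n)
    (S K1 K2 S' K1' K2' : ('rV[R]_n -> Cl R n) -> Prop) :
  (forall g, S g <-> S' g) -> (forall g, K1 g <-> K1' g) -> (forall g, K2 g <-> K2' g) ->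
  direct_sum_on Om S K1 K2 -> direct_sum_on Om S' K1' K2'.
Proof.
move=> SS' KK1 KK2 [decomp disj]; split=> [g|g /KK1 K1g /KK2 K2g]; last exact: disj.
rewrite -SS' decomp; split=> -[g1 [g2 [K1g1 K2g2 e]]];
  by exists g1, g2; split; rewrite ?KK1 ?KK2 // -?KK1 -?KK2.
Qed.

Lemma Bop_twisted (R : realType) (n : nat) (f : 'rV[R]_n -> Cl R n) :
  Bop f = twisted_dirac (ieN R n) (fun x => - f x).
Proof.
by apply/funext => g; apply/funext => x; rewrite /twisted_dirac /dirac_subM clmulNr opprK.
Qed.

Theorem theorem7p1 (R : realType) (n : nat) (Om : set 'rV[R]_n)
  (f : 'rV[R]_n -> 'rV[R]_n) (lam : R[i]) :
  (2 %| n)%N -> odd (n %/ 2) ->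
  open Om ->
  smooth_on Om (fun x => clvec (f x)) ->
  lam != 0 ->
  let fc := fun x => clvec (f x) in
  direct_sum_on Om
    (ker_on Om (fun g x => Aop fc (Aop fc g) x - lam ^+ 2 *: g x))
    (ker_on Om (fun g x => dirac_op g x - clmul (g x) (fc x + lam *: ieN R n)))
    (ker_on Om (fun g x => dirac_op g x - clmul (g x) (fc x - lam *: ieN R n)))
  /\
  direct_sum_on Om
    (ker_on Om (fun g x => Bop fc (Bop fc g) x - lam ^+ 2 *: g x))
    (ker_on Om (fun g x => dirac_op g x + clmul (g x) (fc x - lam *: ieN R n)))
    (ker_on Om (fun g x => dirac_op g x + clmul (g x) (fc x + lam *: ieN R n))).
Proof.
move=> n_even m_odd Om_open f_smooth lam0 fc.
have ieN_invol X : clmul (clmul X (ieN R n)) (ieN R n) = X by exact: clmul_ieN_ieN.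
split; first exact: (ker_sq_direct_sum Om_open ieN_invol f_smooth lam0).
have Nf_smooth : smooth_on Om (fun x => - fc x).
  apply: (smooth_on_eq Om_open _ (smooth_onZ Om_open (-1) f_smooth)) => y _.
  by rewrite scaleN1r.
rewrite Bop_twisted.
apply: direct_sum_on_ext (ker_sq_direct_sum Om_open ieN_invol Nf_smooth lam0) => g.
- by [].
- by apply: ker_on_ext => x _ /=; rewrite -clmulNr opprD opprK.
- by apply: ker_on_ext => x _ /=; rewrite -clmulNr opprD !opprK.
Qed.
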